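(* Suppose that $2\le n_0<\infty$ and that $S$ is submultiplicative on $[1,n_0]$. Then for every $\varepsilon>0$ and every $N_0>n_0$ there exists an extension of $S$ to $[1,N_0]$ which is submultiplicative on $[1,N_0]$ and satisfies $S(N_0)<S(n_0)+\varepsilon$.
   Context: Let $2\le n_0\le\infty$ and let $S$ be a real-valued function on $[1,n_0]$ (on $[1,\infty)$ if $n_0=\infty$). $S$ is called submultiplicative on $[1,n_0]$ if: (a) $S$ is piecewise-linear, continuous, strictly increasing and concave; (b) $S(x)=x$ for $1\le x\le 2$; (c) $S(xy)\le S(x)S(y)$ for all $x,y$ with $1\le x,y,xy\le n_0$. *)

From Stdlib Require Import Reals Lra.
Open Scope R_scope.

Definition piecewise_linear_on (a b : R) (f : R -> R) : Prop :=
  exists (k : nat) (x : nat -> R),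
    x O = a /\ x k = b /\
    (forall i : nat, (i < k)%nat -> x i < x (S i)) /\
    (forall i : nat, (i < k)%nat ->
       exists c d : R, forall t : R, x i <= t <= x (S i) -> f t = c * t + d).

Definition continuous_on_interval (a b : R) (f : R -> R) : Prop :=
  forall x : R, a <= x <= b ->
    forall eps : R, eps > 0 -> exists delta : R, delta > 0 /\
      forall y : R, a <= y <= b -> Rabs (y - x) < delta -> Rabs (f y - f x) < eps.

Definition strictly_increasing_on (a b : R) (f : R -> R) : Prop :=
  forall x y : R, a <= x <= b -> a <= y <= b -> x < y -> f x < f y.

Definition concave_on (a b : R) (f : R -> R) : Prop :=
  forall x y t : R, a <= x <= b -> a <= y <= b -> 0 <= t <= 1 ->
    t * f x + (1 - t) * f y <= f (t * x + (1 - t) * y).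

Definition submultiplicative_on (n0 : R) (S : R -> R) : Prop :=
  piecewise_linear_on 1 n0 S /\
  continuous_on_interval 1 n0 S /\
  strictly_increasing_on 1 n0 S /\
  concave_on 1 n0 S /\
  (forall x : R, 1 <= x <= 2 -> S x = x) /\
  (forall x y : R, 1 <= x -> 1 <= y -> x * y <= n0 -> S (x * y) <= S x * S y).

From Stdlib Require Import Reals Lra Lia Psatz.
Open Scope R_scope.

(* Continue S beyond n0 affinely with a small slope s > 0.  Concavity survives because
   every chord slope of S is at least the slope m of its last linear piece, hence at least s.
   For x >= n0, T x T y - T (x y) = T x (T y - 1) - s x (y - 1), and T y - 1 >= s N0 (y - 1)
   as soon as s N0 (N0 - 1) <= m.  For x, y <= n0 < x y, compare with x' = n0 / y:
   S n0 <= S x' S y, and the extra term s y (x - x') is at most m (x - x') <= S x - S x'. *)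

Definition chord_concave (a b : R) (f : R -> R) : Prop :=
  forall x z y, a <= x -> x < z -> z < y -> y <= b ->
    (f y - f z) * (z - x) <= (f z - f x) * (y - z).

Lemma concave_on_chord (a b : R) (f : R -> R) :
  concave_on a b f -> chord_concave a b f.
Proof.
  intros Hf x z y Hax Hxz Hzy Hyb.
  set (t := (y - z) / (y - x)).
  assert (Ht : t * (y - x) = y - z) by (unfold t; field; lra).
  assert (Ht01 : 0 <= t <= 1) by (split; nra).
  assert (Hz : t * x + (1 - t) * y = z) by nra.
  pose proof (Hf x y t ltac:(lra) ltac:(lra) Ht01) as H; rewrite Hz in H.
  assert (H' : (t * f x + (1 - t) * f y) * (y - x) <= f z * (y - x))
    by (apply Rmult_le_compat_r; lra).
  nra.
Qed.

Lemma chord_concave_on (a b : R) (f : R -> R) :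
  chord_concave a b f -> concave_on a b f.
Proof.
  intros Hf.
  assert (Hlt : forall x y t, a <= x -> x < y -> y <= b -> 0 < t < 1 ->
            t * f x + (1 - t) * f y <= f (t * x + (1 - t) * y)).
  { intros x y t Hx Hxy Hy Ht.
    set (z := t * x + (1 - t) * y).
    assert (Ezx : z - x = (1 - t) * (y - x)) by (unfold z; ring).
    assert (Eyz : y - z = t * (y - x)) by (unfold z; ring).
    pose proof (Hf x z y Hx ltac:(nra) ltac:(nra) Hy) as H.
    rewrite Ezx, Eyz in H.
    apply (Rmult_le_reg_r (y - x)); nra. }
  intros x y t Hx Hy Ht.
  destruct (Req_dec t 0) as [->|Ht0].
  { replace (0 * x + (1 - 0) * y) with y by ring; lra. }
  destruct (Req_dec t 1) as [->|Ht1].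
  { replace (1 * x + (1 - 1) * y) with x by ring; lra. }
  destruct (Rtotal_order x y) as [Hxy|[<-|Hxy]].
  - apply Hlt; lra.
  - replace (t * x + (1 - t) * x) with x by ring; lra.
  - replace (t * x + (1 - t) * y) with ((1 - t) * y + (1 - (1 - t)) * x) by ring.
    pose proof (Hlt y x (1 - t) ltac:(lra) Hxy ltac:(lra) ltac:(lra)). lra.
Qed.

Lemma concave_on_slope_ge_last (a b p m d : R) (f : R -> R) :
  concave_on a b f -> a <= p < b ->
  (forall t, p <= t <= b -> f t = m * t + d) ->
  forall u v, a <= u -> u <= v -> v <= b -> m * (v - u) <= f v - f u.
Proof.
  intros Hf Hp Haff.
  pose proof (concave_on_chord a b f Hf) as Hc.
  assert (Hto_b : forall u, a <= u <= b -> m * (b - u) <= f b - f u).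
  { intros u Hu. destruct (Rle_dec p u).
    - rewrite (Haff u), (Haff b) by lra. lra.
    - pose proof (Hc u p b ltac:(lra) ltac:(lra) ltac:(lra) ltac:(lra)) as H.
      rewrite (Haff p), (Haff b) in * by lra.
      assert (m * (p - u) <= m * p + d - f u) by (apply (Rmult_le_reg_r (b - p)); nra).
      lra. }
  intros u v Hu Huv Hv.
  destruct (Req_dec u v) as [<-|Huv']; [lra|].
  destruct (Req_dec v b) as [->|Hvb]; [apply Hto_b; lra|].
  pose proof (Hc u v b Hu ltac:(lra) ltac:(lra) ltac:(lra)) as H.
  pose proof (Hto_b v ltac:(lra)).
  apply (Rmult_le_reg_r (b - v)); nra.
Qed.

Lemma breakpoints_le (k : nat) (x : nat -> R) :
  (forall i, (i < k)%nat -> x i < x (S i)) ->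
  forall i j, (i <= j <= k)%nat -> x i <= x j.
Proof.
  intros Hinc i j [Hij Hjk]. induction Hij as [|j Hij IH]; [lra|].
  pose proof (Hinc j ltac:(lia)). pose proof (IH ltac:(lia)). lra.
Qed.

Lemma piecewise_linear_on_last_piece (a b : R) (f : R -> R) :
  a < b -> piecewise_linear_on a b f ->
  exists p m d, a <= p < b /\ forall t, p <= t <= b -> f t = m * t + d.
Proof.
  intros Hab (k & x & Hx0 & Hxk & Hinc & Haff).
  destruct k as [|k]; [rewrite Hx0 in Hxk; lra|].
  destruct (Haff k ltac:(lia)) as (m & d & Hmd).
  exists (x k), m, d. rewrite <- Hxk. split; [|exact Hmd].
  pose proof (breakpoints_le _ x Hinc 0 k ltac:(lia)). pose proof (Hinc k ltac:(lia)). lra.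
Qed.

Lemma piecewise_linear_on_ext (a b : R) (f g : R -> R) :
  (forall t, a <= t <= b -> f t = g t) ->
  piecewise_linear_on a b f -> piecewise_linear_on a b g.
Proof.
  intros Hfg (k & x & Hx0 & Hxk & Hinc & Haff).
  exists k, x. repeat split; auto.
  intros i Hi. destruct (Haff i Hi) as (c & d & Hcd). exists c, d.
  intros t Ht.
  pose proof (breakpoints_le _ x Hinc 0 i ltac:(lia)).
  pose proof (breakpoints_le _ x Hinc (S i) k ltac:(lia)).
  rewrite <- Hfg by lra. auto.
Qed.

Lemma piecewise_linear_on_affine (a b m d : R) (f : R -> R) :
  a < b -> (forall t, a <= t <= b -> f t = m * t + d) -> piecewise_linear_on a b f.
Proof.
  intros Hab Haff. exists 1%nat, (fun i => if Nat.eqb i 0 then a else b).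
  repeat split; auto.
  - intros i Hi. replace i with 0%nat by lia. simpl. exact Hab.
  - intros i Hi. replace i with 0%nat by lia. exists m, d. exact Haff.
Qed.

Lemma piecewise_linear_on_glue (a b c : R) (f : R -> R) :
  piecewise_linear_on a b f -> piecewise_linear_on b c f -> piecewise_linear_on a c f.
Proof.
  intros (k1 & x & Hx0 & Hxk & Hxinc & Hxaff) (k2 & y & Hy0 & Hyk & Hyinc & Hyaff).
  set (z := fun i => if Nat.leb i k1 then x i else y (i - k1)%nat).
  assert (Hzx : forall i, (i <= k1)%nat -> z i = x i).
  { intros i Hi. unfold z. now rewrite (proj2 (Nat.leb_le i k1) Hi). }
  assert (Hzy : forall i, (k1 <= i)%nat -> z i = y (i - k1)%nat).
  { intros i Hi. destruct (Nat.eq_dec i k1) as [->|Hne].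
    - rewrite Hzx, Nat.sub_diag by lia. congruence.
    - unfold z. now rewrite (proj2 (Nat.leb_gt i k1) ltac:(lia)). }
  exists (k1 + k2)%nat, z. split; [|split; [|split]].
  - now rewrite Hzx by lia.
  - rewrite Hzy by lia. now replace (k1 + k2 - k1)%nat with k2 by lia.
  - intros i Hi. destruct (Nat.lt_ge_cases i k1).
    + rewrite !Hzx by lia. apply Hxinc; lia.
    + rewrite !Hzy by lia. replace (S i - k1)%nat with (S (i - k1)) by lia.
      apply Hyinc; lia.
  - intros i Hi. destruct (Nat.lt_ge_cases i k1).
    + rewrite !Hzx by lia. apply Hxaff; lia.
    + rewrite !Hzy by lia. replace (S i - k1)%nat with (S (i - k1)) by lia.
      apply Hyaff; lia.
Qed.

Lemma continuous_on_interval_ext (a b : R) (f g : R -> R) :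
  (forall t, a <= t <= b -> f t = g t) ->
  continuous_on_interval a b f -> continuous_on_interval a b g.
Proof.
  intros Hfg Hf x Hx e He. destruct (Hf x Hx e He) as (d & Hd & Hdf).
  exists d. split; auto. intros y Hy Hyx. rewrite <- !Hfg by lra. auto.
Qed.

Lemma continuous_on_interval_affine (a b m d : R) (f : R -> R) :
  (forall t, a <= t <= b -> f t = m * t + d) -> continuous_on_interval a b f.
Proof.
  intros Haff x Hx e He.
  pose proof (Rabs_pos m).
  exists (e / (Rabs m + 1)). split; [apply Rdiv_lt_0_compat; lra|].
  intros y Hy Hyx. rewrite !Haff by lra.
  replace (m * y + d - (m * x + d)) with (m * (y - x)) by ring.
  rewrite Rabs_mult.
  assert (Hlt : Rabs (y - x) * (Rabs m + 1) < e).
  { apply (Rmult_lt_compat_r (Rabs m + 1)) in Hyx; [|lra].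
    unfold Rdiv in Hyx. rewrite Rmult_assoc, Rinv_l in Hyx by lra. lra. }
  pose proof (Rabs_pos (y - x)). nra.
Qed.

Lemma continuous_on_interval_glue (a b c : R) (f : R -> R) :
  continuous_on_interval a b f -> continuous_on_interval b c f ->
  continuous_on_interval a c f.
Proof.
  intros Hl Hr x Hx e He.
  destruct (Rtotal_order x b) as [Hxb|[->|Hxb]].
  - destruct (Hl x ltac:(lra) e He) as (d & Hd & Hdf).
    exists (Rmin d (b - x)). split; [apply Rmin_glb_lt; lra|].
    intros y Hy Hyx. pose proof (Rmin_l d (b - x)). pose proof (Rmin_r d (b - x)).
    apply Rabs_def2 in Hyx. apply Hdf; [lra|]. apply Rabs_def1; lra.
  - destruct (Hl b ltac:(lra) e He) as (dl & Hdl & Hdlf).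
    destruct (Hr b ltac:(lra) e He) as (dr & Hdr & Hdrf).
    exists (Rmin dl dr). split; [apply Rmin_glb_lt; lra|].
    intros y Hy Hyx. pose proof (Rmin_l dl dr). pose proof (Rmin_r dl dr).
    apply Rabs_def2 in Hyx. destruct (Rle_dec y b).
    + apply Hdlf; [lra|]. apply Rabs_def1; lra.
    + apply Hdrf; [lra|]. apply Rabs_def1; lra.
  - destruct (Hr x ltac:(lra) e He) as (d & Hd & Hdf).
    exists (Rmin d (x - b)). split; [apply Rmin_glb_lt; lra|].
    intros y Hy Hyx. pose proof (Rmin_l d (x - b)). pose proof (Rmin_r d (x - b)).
    apply Rabs_def2 in Hyx. apply Hdf; [lra|]. apply Rabs_def1; lra.
Qed.

Definition affine_extension (b s : R) (f : R -> R) (u : R) : R :=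
  if Rle_dec u b then f u else f b + s * (u - b).

Section AffineExtension.

Variables (f : R -> R) (a b c s : R).

Local Notation T := (affine_extension b s f).

Lemma affine_extension_le u : u <= b -> T u = f u.
Proof. intros Hu. unfold affine_extension. destruct (Rle_dec u b); [auto|lra]. Qed.

Lemma affine_extension_ge u : b <= u -> T u = f b + s * (u - b).
Proof.
  intros Hu. unfold affine_extension. destruct (Rle_dec u b); [|auto].
  replace u with b by lra. ring.
Qed.

Lemma piecewise_linear_on_affine_extension :
  b < c -> piecewise_linear_on a b f -> piecewise_linear_on a c T.
Proof.
  intros Hbc Hf. apply (piecewise_linear_on_glue a b c).
  - apply (piecewise_linear_on_ext a b f); [|exact Hf].
    intros t Ht. symmetry. apply affine_extension_le. lra.
  - apply (piecewise_linear_on_affine b c s (f b - s * b)); [exact Hbc|].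
    intros t Ht. rewrite affine_extension_ge by lra. ring.
Qed.

Lemma continuous_on_interval_affine_extension :
  continuous_on_interval a b f -> continuous_on_interval a c T.
Proof.
  intros Hf. apply (continuous_on_interval_glue a b c).
  - apply (continuous_on_interval_ext a b f); [|exact Hf].
    intros t Ht. symmetry. apply affine_extension_le. lra.
  - apply (continuous_on_interval_affine b c s (f b - s * b)).
    intros t Ht. rewrite affine_extension_ge by lra. ring.
Qed.

Lemma strictly_increasing_on_affine_extension :
  0 < s -> strictly_increasing_on a b f -> strictly_increasing_on a c T.
Proof.
  intros Hs Hf x y Hx Hy Hxy.
  destruct (Rle_dec y b).
  { rewrite !affine_extension_le by lra. apply Hf; lra. }
  rewrite (affine_extension_ge y) by lra.
  destruct (Rle_dec x b).
  - rewrite affine_extension_le by lra.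
    assert (f x <= f b).
    { destruct (Req_dec x b) as [->|Hxb]; [lra|]. left; apply Hf; lra. }
    nra.
  - rewrite affine_extension_ge by lra. nra.
Qed.

Lemma concave_on_affine_extension :
  concave_on a b f -> (forall u, a <= u <= b -> s * (b - u) <= f b - f u) ->
  concave_on a c T.
Proof.
  intros Hf Hslope. apply chord_concave_on.
  pose proof (concave_on_chord a b f Hf) as Hc.
  intros x z y Hx Hxz Hzy Hy.
  destruct (Rle_dec y b).
  { rewrite !affine_extension_le by lra. apply Hc; lra. }
  destruct (Rle_dec b x).
  { rewrite !affine_extension_ge by lra. apply Req_le. ring. }
  rewrite (affine_extension_le x), (affine_extension_ge y) by lra.
  destruct (Rlt_le_dec z b).
  - rewrite affine_extension_le by lra.
    pose proof (Hc x z b Hx Hxz ltac:(lra) ltac:(lra)) as Hxzb.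
    pose proof (Hslope z ltac:(lra)).
    assert (Hxz_s : s * (z - x) <= f z - f x) by (apply (Rmult_le_reg_r (b - z)); nra).
    assert (s * (y - b) * (z - x) <= (f z - f x) * (y - b)) by nra.
    nra.
  - rewrite affine_extension_ge by lra.
    pose proof (Hslope x ltac:(lra)).
    assert (s * (z - x) <= f b + s * (z - b) - f x) by lra.
    replace (f b + s * (y - b) - (f b + s * (z - b))) with (s * (y - z)) by ring.
    nra.
Qed.

End AffineExtension.

Section Submultiplicativity.

Variables (S : R -> R) (n0 N0 m s : R).

Hypotheses (Hn0 : 2 <= n0) (HN0 : n0 <= N0) (Hs : 0 <= s) (Hsm : s * (N0 * (N0 - 1)) <= m)
  (HS1 : S 1 = 1)
  (Hslope : forall u v, 1 <= u -> u <= v -> v <= n0 -> m * (v - u) <= S v - S u)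
  (Hmul : forall x y, 1 <= x -> 1 <= y -> x * y <= n0 -> S (x * y) <= S x * S y).

Local Notation T := (affine_extension n0 s S).

Lemma slope_mul_N0_le : s * N0 <= m.
Proof.
  assert (0 <= s * N0 * (N0 - 2)) by (apply Rmult_le_pos; [apply Rmult_le_pos|]; lra).
  nra.
Qed.

Lemma affine_extension_chord_from_one y :
  1 <= y <= N0 -> s * N0 * (y - 1) <= T y - 1.
Proof.
  intros Hy. pose proof slope_mul_N0_le.
  destruct (Rle_dec y n0).
  - rewrite affine_extension_le by lra. rewrite <- HS1.
    pose proof (Hslope 1 y ltac:(lra) ltac:(lra) ltac:(lra)). nra.
  - rewrite affine_extension_ge by lra.
    pose proof (Hslope 1 n0 ltac:(lra) ltac:(lra) ltac:(lra)). rewrite HS1 in *.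
    assert (s * N0 * (y - 1) <= s * N0 * (N0 - 1))
      by (apply Rmult_le_compat_l; [apply Rmult_le_pos|]; lra).
    assert (0 <= m) by (assert (0 <= s * N0) by (apply Rmult_le_pos; lra); lra).
    assert (m <= m * (n0 - 1)) by nra.
    assert (0 <= s * (y - n0)) by nra.
    nra.
Qed.

Lemma affine_extension_ge_one y : 1 <= y <= N0 -> 1 <= T y.
Proof.
  intros Hy. pose proof (affine_extension_chord_from_one y Hy).
  assert (0 <= s * N0 * (y - 1)) by (repeat apply Rmult_le_pos; lra).
  lra.
Qed.

Lemma affine_extension_mul_large x y :
  n0 <= x -> 1 <= y -> x * y <= N0 -> T (x * y) <= T x * T y.
Proof.
  intros Hx Hy Hxy.
  assert (HxN0 : x <= N0) by nra.
  assert (Hstep : T (x * y) = T x + s * x * (y - 1))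
    by (rewrite !affine_extension_ge by nra; ring).
  pose proof (affine_extension_chord_from_one y ltac:(nra)).
  pose proof (affine_extension_ge_one x ltac:(lra)).
  pose proof (affine_extension_ge_one y ltac:(nra)).
  assert (s * x * (y - 1) <= s * N0 * (y - 1)) by (apply Rmult_le_compat_r; nra).
  nra.
Qed.

Lemma affine_extension_mul_small x y :
  1 <= x <= n0 -> 1 <= y <= n0 -> n0 < x * y -> x * y <= N0 -> T (x * y) <= T x * T y.
Proof.
  intros Hx Hy Hxy HxyN0.
  rewrite affine_extension_ge, !affine_extension_le by lra.
  set (x' := n0 / y).
  assert (Ex' : x' * y = n0) by (unfold x'; field; lra).
  assert (Hx'x : 1 <= x' <= x) by nra.
  pose proof (Hmul x' y ltac:(lra) ltac:(lra) ltac:(lra)) as Hm. rewrite Ex' in Hm.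
  pose proof (Hslope x' x ltac:(lra) ltac:(lra) ltac:(lra)).
  pose proof (affine_extension_ge_one y ltac:(lra)).
  rewrite affine_extension_le in * by lra.
  assert (s * y <= m) by (pose proof slope_mul_N0_le; nra).
  assert (s * y * (x - x') <= m * (x - x')) by (apply Rmult_le_compat_r; lra).
  assert (0 <= (S x - S x') * (S y - 1)) by (apply Rmult_le_pos; nra).
  replace (s * (x * y - n0)) with (s * y * (x - x')) by (rewrite <- Ex'; ring).
  nra.
Qed.

Lemma affine_extension_submultiplicative x y :
  1 <= x -> 1 <= y -> x * y <= N0 -> T (x * y) <= T x * T y.
Proof.
  intros Hx Hy Hxy.
  destruct (Rle_dec n0 x); [now apply affine_extension_mul_large|].
  destruct (Rle_dec n0 y).
  { rewrite Rmult_comm, (Rmult_comm (T x)).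
    apply affine_extension_mul_large; lra. }
  destruct (Rle_dec (x * y) n0).
  - rewrite !affine_extension_le by lra. now apply Hmul.
  - apply affine_extension_mul_small; lra.
Qed.

End Submultiplicativity.

Lemma exists_small_pos (A B C D : R) :
  0 < A -> 0 < B -> 0 < C -> 0 < D -> exists s, 0 < s /\ s * B <= A /\ s * D < C.
Proof.
  intros HA HB HC HD.
  exists (Rmin (A / B) (C / (2 * D))).
  pose proof (Rmin_l (A / B) (C / (2 * D))). pose proof (Rmin_r (A / B) (C / (2 * D))).
  assert (A / B * B = A) by (field; lra).
  assert (C / (2 * D) * D = C / 2) by (field; lra).
  repeat split.
  - apply Rmin_glb_lt; apply Rdiv_lt_0_compat; lra.
  - apply (Rle_trans _ (A / B * B)); [apply Rmult_le_compat_r|]; lra.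
  - apply (Rle_lt_trans _ (C / (2 * D) * D)); [apply Rmult_le_compat_r|]; lra.
Qed.

Theorem lemma2p3 (n0 : R) (S : R -> R) :
  2 <= n0 -> submultiplicative_on n0 S ->
  forall eps N0 : R, eps > 0 -> N0 > n0 ->
    exists T : R -> R,
      (forall x : R, 1 <= x <= n0 -> T x = S x) /\
      submultiplicative_on N0 T /\
      T N0 < S n0 + eps.
Proof.
  intros Hn0 [Hpl [Hcont [Hinc [Hconc [Hid Hmul]]]]] eps N0 Heps HN0.
  destruct (piecewise_linear_on_last_piece 1 n0 S ltac:(lra) Hpl) as (p & m & d & Hp & Haff).
  pose proof (concave_on_slope_ge_last 1 n0 p m d S Hconc Hp Haff) as Hslope.
  assert (Hm : 0 < m).
  { pose proof (Hinc p n0 ltac:(lra) ltac:(lra) ltac:(lra)) as H.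
    rewrite !Haff in H by lra. nra. }
  destruct (exists_small_pos m (N0 * (N0 - 1)) eps (N0 - n0))
    as (s & Hs & HsN0 & Hseps); [lra|nra|lra|lra|].
  exists (affine_extension n0 s S).
  refine (conj _ (conj (conj _ (conj _ (conj _ (conj _ (conj _ _))))) _)).
  - intros x Hx. apply affine_extension_le. lra.
  - apply piecewise_linear_on_affine_extension; [lra|exact Hpl].
  - now apply continuous_on_interval_affine_extension.
  - now apply strictly_increasing_on_affine_extension.
  - apply concave_on_affine_extension; [exact Hconc|].
    intros u Hu. pose proof (Hslope u n0 ltac:(lra) ltac:(lra) ltac:(lra)).
    assert (s <= m) by (assert (1 <= N0 * (N0 - 1)) by nra; nra).
    assert (s * (n0 - u) <= m * (n0 - u)) by (apply Rmult_le_compat_r; lra).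
    lra.
  - intros x Hx. rewrite affine_extension_le by lra. now apply Hid.
  - apply (affine_extension_submultiplicative S n0 N0 m s); try lra; auto.
    apply Hid. lra.
  - rewrite affine_extension_ge by lra. lra.
Qed.
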